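(* Let $n=3$, $A\in\mathbb{R}^{3\times 3}$ and $C\in\mathbb{R}^{1\times 3}$. Assume that $(A,C)$ is an observable pair, that all eigenvalues of $A$ are nonzero, and that $C\neq \alpha CA^{t}$ for all positive integers $t$ and all $\alpha\in\mathbb{R}$. Let $t_1,t_2$ be any two distinct nonnegative integers, let $\Delta$ be a positive integer that is not a pathological sampling period of $A$, and set $t_3=t_1+\Delta$, $t_4=t_2+\Delta$. Then the matrix with rows $CA^{t_1},CA^{t_2},CA^{t_3},CA^{t_4}$ has rank $3$.
   Context: Setting: discrete-time single-output system $x(t+1)=Ax(t)+Bu(t)$, $y(t)=Cx(t)+Du(t)$ with output measured only at selected time instances; the sample-based observability matrix for instances $t_1,\ldots,t_l$ is the matrix with rows $CA^{t_1},\ldots,CA^{t_l}$. $(A,C)$ is observable if the matrix with rows $C,CA,\ldots,CA^{n-1}$ has rank $n$. A positive integer $h$ is a pathological sampling period of $A$ if there exist two distinct eigenvalues $\lambda_p\neq\lambda_q$ of $A$ in different Jordan blocks with $\lambda_p^h=\lambda_q^h$. *)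

From HB Require Import structures.
From mathcomp Require Import all_boot all_order all_algebra.
From mathcomp Require Import reals.
From mathcomp Require Import complex.
Set Implicit Arguments. Unset Strict Implicit. Unset Printing Implicit Defensive.
Import Order.TTheory GRing.Theory Num.Theory.
Local Open Scope ring_scope.

Definition sample_obs_mx (R : realType) (n l : nat) (A : 'M[R]_n)
  (C : 'rV[R]_n) (ts : 'I_l -> nat) : 'M[R]_(l, n) :=
  \matrix_(i < l) (C *m A ^+ ts i).

Definition observable (R : realType) (n : nat) (A : 'M[R]_n) (C : 'rV[R]_n) :=
  \rank (sample_obs_mx A C (fun i : 'I_n => nat_of_ord i)) = n.

Definition cmx (R : realType) (n : nat) (A : 'M[R]_n) : 'M[complex R]_n :=
  map_mx (fun x : R => (x%:C)%C) A.

Definition ceig (R : realType) (n : nat) (A : 'M[R]_n) (l : complex R) :=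
  eigenvalue (cmx A) l.

(* h is a pathological sampling period of A: two distinct eigenvalues
   (hence in different Jordan blocks) with equal h-th powers *)
Definition pathological (R : realType) (n : nat) (A : 'M[R]_n) (h : nat) :=
  (0 < h)%N /\
  exists lp lq : complex R, [/\ ceig A lp, ceig A lq, lp != lq & lp ^+ h = lq ^+ h].

From HB Require Import structures.
From mathcomp Require Import all_boot all_order all_algebra.
From mathcomp Require Import reals complex.
From mathcomp Require Import ring zify.
Set Implicit Arguments. Unset Strict Implicit. Unset Printing Implicit Defensive.
Import Order.TTheory GRing.Theory Num.Theory.
Local Open Scope ring_scope.

(* If the four sampled rows spanned only a plane, the independent rows C A^t1 and C A^t2 (no
   positive power of A is scalar) would span it, and observability would turn the two other rows
   into identities A^D = b A^s + a and A^(s+D) = d A^s + c, where s = t2 - t1.  Eliminating A^D,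
   the cubic minimal polynomial of A divides a quadratic polynomial in X^s.  As D is not
   pathological, z |-> z^s is injective on the eigenvalues, and since X^s - y has simple roots
   for y != 0, no such quadratic has a cubic divisor with nonzero roots. *)

Lemma XnsubC_factor (R : comNzRingType) (l : R) (s : nat) :
  exists2 h : {poly R}, 'X^s - (l ^+ s)%:P = ('X - l%:P) * h & h.[l] = s%:R * l ^+ s.-1.
Proof.
exists (\sum_(i < s) 'X^(s.-1 - i) * l%:P ^+ i); first by rewrite rmorphXn subrXX.
rewrite horner_sum (eq_bigr (fun=> l ^+ s.-1)) ?sumr_const ?card_ord ?mulr_natl // => i _.
rewrite hornerM hornerXn -rmorphXn hornerC -exprD subnK //.
by have := ltn_ord i; lia.
Qed.

Section SimpleRoots.
Variables (K : numFieldType) (s : nat).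
Hypothesis s_gt0 : (0 < s)%N.

Lemma dvdp_XsubC_expS_XnsubCM (l : K) (k : nat) (g : {poly K}) : l != 0 ->
  ('X - l%:P) ^+ k.+1 %| ('X^s - (l ^+ s)%:P) * g -> ('X - l%:P) ^+ k %| g.
Proof.
move=> l_neq0; have [h -> hl] := XnsubC_factor l s.
have h_coprime : coprimep (('X - l%:P) ^+ k) h.
  apply/coprimep_expl; rewrite coprimep_sym coprimep_XsubC /root hl.
  by rewrite mulf_neq0 ?expf_neq0 // pnatr_eq0 -lt0n.
by rewrite exprS -mulrA dvdp_mul2l ?polyXsubC_eq0 // Gauss_dvdpr.
Qed.

Lemma sqr_XsubC_mul_ndvd_XnsubC2 (l m y1 y2 : K) : l != 0 ->
  (m ^+ s = l ^+ s -> m = l) ->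
  ~~ (('X - l%:P) ^+ 2 * ('X - m%:P) %| ('X^s - y1%:P) * ('X^s - y2%:P)).
Proof.
move=> l_neq0 pow_inj; apply/negP.
wlog <- : y1 y2 / l ^+ s = y1.
  move=> hyp dvd; have : ('X - l%:P) %| ('X^s - y1%:P) * ('X^s - y2%:P).
    by apply: dvdp_trans dvd; rewrite expr2 -mulrA dvdp_mulIl.
  rewrite dvdp_XsubCl /root hornerM !hornerE mulf_eq0 !subr_eq0 => /orP[]/eqP ly.
    exact: hyp ly dvd.
  by rewrite [in X in _ %| X]mulrC in dvd; apply: hyp ly dvd.
move=> dvd; have y2E : y2 = l ^+ s.
  have : ('X - l%:P) ^+ 1 %| 'X^s - y2%:P.
    by apply: (dvdp_XsubC_expS_XnsubCM l_neq0); apply: dvdp_trans dvd; apply: dvdp_mulr.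
  by rewrite expr1 dvdp_XsubCl /root !hornerE subr_eq0 => /eqP.
subst y2; have ml : m = l.
  apply: pow_inj; have := dvdp_trans (dvdp_mull _ (dvdpp ('X - m%:P))) dvd.
  by rewrite dvdp_XsubCl /root hornerM !hornerE mulf_eq0 orbb subr_eq0 => /eqP.
subst m; move: dvd; rewrite -exprSr => /(dvdp_XsubC_expS_XnsubCM l_neq0).
rewrite -[X in _ %| X]mulr1 => /(dvdp_XsubC_expS_XnsubCM l_neq0).
by rewrite expr1 dvdp1 size_XsubC.
Qed.

Lemma prod_XsubC_ndvd_quadratic_Xn (r : seq K) (b c : K) :
  size r = 3 -> 0 \notin r -> {in r &, injective (fun z => z ^+ s)} ->
  ~~ (\prod_(z <- r) ('X - z%:P) %| 'X^s ^+ 2 - b *: 'X^s - c%:P).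
Proof.
case: r => [|z1 [|z2 [|z3 []]]] // _ r_neq0 pow_inj; apply/negP.
rewrite !big_cons big_nil mulr1 => dvd.
have in1 : z1 \in [:: z1; z2; z3] by rewrite mem_head.
have in2 : z2 \in [:: z1; z2; z3] by rewrite !inE eqxx orbT.
have in3 : z3 \in [:: z1; z2; z3] by rewrite !inE eqxx !orbT.
have z_neq0 z : z \in [:: z1; z2; z3] -> z != 0 by move=> zr; apply: contraNneq r_neq0 => <-.
set y1 := z1 ^+ s; set y2 := b - y1.
have quadE : 'X^s ^+ 2 - b *: 'X^s - c%:P = ('X^s - y1%:P) * ('X^s - y2%:P).
  have : root ('X^s ^+ 2 - b *: 'X^s - c%:P) z1.
    by rewrite -dvdp_XsubCl (dvdp_trans _ dvd) ?dvdp_mulIl.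
  rewrite /root !hornerE subr_eq0 => /eqP <-; rewrite /y2 -mul_polyC.
  rewrite !rmorphB !rmorphM /= !rmorphXn /=; ring.
rewrite quadE in dvd.
have root_pow z : ('X - z%:P) %| ('X^s - y1%:P) * ('X^s - y2%:P) -> z ^+ s = y1 \/ z ^+ s = y2.
  by rewrite dvdp_XsubCl /root hornerM !hornerE mulf_eq0 !subr_eq0 => /orP[]/eqP; [left|right].
have l2m_ndvd l m : l \in [:: z1; z2; z3] -> m \in [:: z1; z2; z3] ->
    ~~ (('X - l%:P) ^+ 2 * ('X - m%:P) %| ('X^s - y1%:P) * ('X^s - y2%:P)).
  by move=> lr mr; apply: sqr_XsubC_mul_ndvd_XnsubC2; [exact: z_neq0 | exact: pow_inj].
(* The three s-th powers lie in {y1, y2}, so two of the roots coincide. *)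
have [e2|e2] := root_pow z2 (dvdp_trans (dvdp_mull _ (dvdp_mulIl _ _)) dvd).
  rewrite (pow_inj z2 z1) // mulrA -expr2 in dvd.
  by move: dvd; apply/negP/l2m_ndvd.
have [e3|e3] := root_pow z3 (dvdp_trans (dvdp_mull _ (dvdp_mulIr _ _)) dvd).
  rewrite (pow_inj z3 z1) // [_ * ('X - z1%:P)]mulrC mulrA -expr2 in dvd.
  by move: dvd; apply/negP/l2m_ndvd.
rewrite (pow_inj z3 z2) /= ?e2 ?e3 // -expr2 mulrC in dvd.
by move: dvd; apply/negP/l2m_ndvd.
Qed.

End SimpleRoots.

Section Observability.
Variables (R : realType) (n : nat) (A : 'M[R]_n.+1) (C : 'rV[R]_n.+1).
Hypothesis obs : observable A C.

Local Notation obs_mx := (sample_obs_mx A C (fun i : 'I_n.+1 => nat_of_ord i)).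

Lemma observable_unitmx : obs_mx \in unitmx.
Proof. by rewrite -row_free_unit /row_free obs. Qed.

Lemma observable_comm_eq0 (B : 'M_n.+1) : comm_mx A B -> C *m B = 0 -> B = 0.
Proof.
move=> AB CB0; rewrite -(mulKmx observable_unitmx B).
suff -> : obs_mx *m B = 0 by rewrite mulmx0.
apply/row_matrixP => i; rewrite row_mul rowK row0 -mulmxA !mulmxE.
by rewrite -(commrX i (comm_mx_sym AB)) -mulmxE mulmxA CB0 mul0mx.
Qed.

Lemma observable_poly_eq0 (p : {poly R}) :
  (size p <= n.+1)%N -> C *m horner_mx A p = 0 -> p = 0.
Proof.
move=> size_p Cp0; set v : 'rV[R]_n.+1 := \row_(i < n.+1) p`_i.
have pE : p = \sum_(i < n.+1) v 0 i *: 'X^i.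
  under eq_bigr do rewrite mxE; rewrite -poly_def; apply/polyP => i.
  by rewrite coef_poly; case: ltnP => // /(leq_trans size_p)/leq_sizeP->.
have v0 : v = 0.
  suff vO : v *m obs_mx = 0 by rewrite -(mulmxK observable_unitmx v) vO mul0mx.
  rewrite -Cp0 mulmx_sum_row {1}pE rmorph_sum mulmx_sumr; apply: eq_bigr => i _.
  by rewrite rowK /= horner_mxZ rmorphXn /= horner_mx_X scalemxAr.
by rewrite pE big1 // => i _; rewrite v0 mxE scale0r.
Qed.

Lemma observable_mxminpoly_size : size (mxminpoly A) = n.+2.
Proof.
have char_neq0 : char_poly A != 0 by rewrite -size_poly_eq0 size_char_poly.
apply/eqP; rewrite eqn_leq -{1}(size_char_poly A) dvdp_leq ?mxminpoly_dvd_char //=.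
rewrite ltnNge; apply: contraNN (monic_neq0 (mxminpoly_monic A)) => size_le.
by rewrite (observable_poly_eq0 size_le) // mx_root_minpoly mulmx0.
Qed.

Lemma observable_mul_expmx u : A \in unitmx -> observable A (C *m A ^+ u).
Proof.
move=> A_unit; rewrite /observable -[RHS]obs -[RHS](mxrankMfree _ (_ : row_free (A ^+ u))).
  congr (\rank _); apply/row_matrixP => i.
  by rewrite row_mul !rowK -!mulmxA !mulmxE -!exprD addnC.
by rewrite row_free_unit; exact: unitrX.
Qed.

End Observability.

Lemma ceig_neq0_unitmx (R : realType) (n : nat) (A : 'M[R]_n.+1) :
  (forall l, ceig A l -> l != 0) -> A \in unitmx.
Proof.
move=> eig_neq0; apply: contraT; rewrite unitmxE unitfE negbK => /eqP detA0.
suff /eig_neq0 : ceig A 0 by rewrite eqxx.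
rewrite /ceig eigenvalue_root_char /root horner_coef0 char_poly_det.
by rewrite (det_map_mx (real_complex R)) detA0 rmorph0 mulr0.
Qed.

Lemma horner_mx_scaleXnDC (R : comNzRingType) (n : nat) (A : 'M[R]_n.+1) (a b : R) (s : nat) :
  horner_mx A (b *: 'X^s + a%:P) = b *: A ^+ s + a%:M.
Proof. by rewrite rmorphD /= horner_mxZ rmorphXn /= horner_mx_X horner_mx_C. Qed.

Section PowerRelations.
Variables (R : realType) (n : nat) (A : 'M[R]_n.+1) (C : 'rV[R]_n.+1).
Hypotheses (obs : observable A C) (A_unit : A \in unitmx).
Hypothesis C_not_eigen : forall (t : nat) (a : R), (0 < t)%N -> C != a *: (C *m A ^+ t).

Lemma expmx_scalar_indep (t : nat) (a b : R) :
  (0 < t)%N -> b *: A ^+ t + a%:M = 0 -> b = 0 /\ a = 0.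
Proof.
move=> t_gt0 rel; have a0 : a = 0.
  apply/eqP; apply: contraT => a_neq0; have /eqP[] := C_not_eigen (- (b / a)) t_gt0.
  have := congr1 (mulmx C) rel; rewrite mulmxDr mul_mx_scalar -scalemxAr mulmx0 addrC.
  move/eqP; rewrite addr_eq0 => /eqP aC.
  by rewrite -[LHS](scalerK a_neq0) aC scalerN scalerA mulrC scaleNr.
split=> //; move: rel; rewrite a0 raddf0 addr0 => rel.
apply/eqP; apply: contraT => b_neq0; have := unitrX t A_unit.
by rewrite -(scalerK b_neq0 (A ^+ t)) rel scaler0 unitr0.
Qed.

Lemma row_free_pow_pair (u s : nat) :
  (0 < s)%N -> row_free (col_mx (C *m A ^+ u) (C *m A ^+ (u + s))).
Proof.
move=> s_gt0; apply/inj_row_free => v.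
rewrite -[v]hsubmxK mul_row_col [lsubmx v]mx11_scalar [rsubmx v]mx11_scalar !mul_scalar_mx.
move=> rel; have /expmx_scalar_indep[//|-> ->] :
    rsubmx v 0 0 *: A ^+ s + (lsubmx v 0 0)%:M = 0.
  apply: (observable_comm_eq0 (observable_mul_expmx obs u A_unit)).
    by rewrite -horner_mx_scaleXnDC; apply/comm_mx_horner/comm_mx_refl.
  by rewrite mulmxDr mul_mx_scalar -scalemxAr -mulmxA -[_ *m A ^+ s]exprD addrC.
by rewrite !raddf0 row_mx0.
Qed.

Lemma rank_le2_pow_relation (k : nat) (M : 'M_(k, n.+1)) (u s e : nat) :
  (0 < s)%N -> (\rank M <= 2)%N ->
  (C *m A ^+ u <= M)%MS -> (C *m A ^+ (u + s) <= M)%MS -> (C *m A ^+ (u + e) <= M)%MS ->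
  exists a b : R, horner_mx A ('X^e - (b *: 'X^s + a%:P)) = 0.
Proof.
move=> s_gt0 rkM sub_u sub_us sub_ue.
set N := col_mx (C *m A ^+ u) (C *m A ^+ (u + s)).
have sNM : (N <= M)%MS by rewrite col_mx_sub sub_u sub_us.
have sMN : (M <= N)%MS.
  by rewrite -(mxrank_leqif_sup sNM).2 eqn_leq mxrankS //= (eqP (row_free_pow_pair u s_gt0)).
have /submxP[z ueE] := submx_trans sub_ue sMN.
rewrite -[z]hsubmxK mul_row_col [lsubmx z]mx11_scalar [rsubmx z]mx11_scalar in ueE.
exists (lsubmx z 0 0), (rsubmx z 0 0).
apply: (observable_comm_eq0 (observable_mul_expmx obs u A_unit)).
  exact/comm_mx_horner/comm_mx_refl.
rewrite rmorphB rmorphXn /= horner_mx_X horner_mx_scaleXnDC mulmxBr -mulmxA.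
rewrite -[_ *m A ^+ e]exprD ueE mulmxDr !mul_scalar_mx mul_mx_scalar -scalemxAr -mulmxA.
by rewrite -[_ *m A ^+ s]exprD [X in _ - X]addrC subrr.
Qed.

End PowerRelations.

Lemma ceig_root_map (R : realType) (n : nat) (A : 'M[R]_n.+1) (p : {poly R}) (z : complex R) :
  horner_mx A p = 0 -> ceig A z -> root (map_poly (real_complex R) p) z.
Proof.
move=> pA0 z_eig; have := mxminpoly_min pA0.
rewrite -(dvdp_map (real_complex R)) -(mxminpoly_map (real_complex R)) -dvdp_XsubCl.
by apply: dvdp_trans; rewrite dvdp_XsubCl -eigenvalue_root_min.
Qed.

Lemma nonpathological_pow_inj (R : realType) (n : nat) (A : 'M[R]_n.+1) (D s : nat) (a b : R) :
  (0 < D)%N -> ~ pathological A D -> horner_mx A ('X^D - (b *: 'X^s + a%:P)) = 0 ->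
  {in ceig A &, injective (fun z => z ^+ s)}.
Proof.
move=> D_gt0 npath rel z w; rewrite !unfold_in => z_eig w_eig zw.
apply/eqP; apply: contraT => z_neq_w.
have pow_rel x : ceig A x -> x ^+ D = (b%:C * x ^+ s + a%:C)%C.
  move=> /(ceig_root_map rel); rewrite !rmorphB !rmorphD /= map_polyZ !map_polyXn map_polyC /=.
  by rewrite /root !hornerE subr_eq0 => /eqP.
case: npath; split=> //; exists z, w; split; [exact: z_eig | exact: w_eig | exact: z_neq_w |].
by rewrite (pow_rel z z_eig) (pow_rel w w_eig) zw.
Qed.

Section Dimension3.
Variables (R : realType) (A : 'M[R]_3) (C : 'rV[R]_3).
Hypotheses (obs : observable A C) (eig_neq0 : forall l, ceig A l -> l != 0).

Lemma quadratic_Xn_annihilator_neq0 (s : nat) (b c : R) :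
  (0 < s)%N -> {in ceig A &, injective (fun z => z ^+ s)} ->
  horner_mx A ('X^s ^+ 2 - b *: 'X^s - c%:P) != 0.
Proof.
move=> s_gt0 pow_inj; apply/eqP => /mxminpoly_min.
rewrite -(dvdp_map (real_complex R)) -(mxminpoly_map (real_complex R)).
have [r rE] := closed_field_poly_normal (mxminpoly (cmx A)).
rewrite (monicP (mxminpoly_monic _)) scale1r in rE.
have r_eig : {subset r <= ceig A}.
  by move=> z zr; rewrite unfold_in /ceig eigenvalue_root_min rE root_prod_XsubC.
have size_r : size r = 3%N.
  have := size_prod_XsubC r id; rewrite -rE (mxminpoly_map (real_complex R)).
  by rewrite size_map_poly (observable_mxminpoly_size obs) => -[].
have r_neq0 : 0 \notin r by apply/negP => /r_eig/eig_neq0; rewrite eqxx.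
rewrite rE !rmorphB /= map_polyZ rmorphXn /= map_polyXn map_polyC /=.
by apply/negP/prod_XsubC_ndvd_quadratic_Xn => //; apply: sub_in2 pow_inj.
Qed.

Hypothesis C_not_eigen : forall (t : nat) (a : R), (0 < t)%N -> C != a *: (C *m A ^+ t).
Variable D : nat.
Hypotheses (D_gt0 : (0 < D)%N) (npath : ~ pathological A D).

Lemma sample_rows_rank_gt2 (k : nat) (M : 'M_(k, 3)) (t1 t2 : nat) : t1 != t2 ->
  (C *m A ^+ t1 <= M)%MS -> (C *m A ^+ t2 <= M)%MS ->
  (C *m A ^+ (t1 + D) <= M)%MS -> (C *m A ^+ (t2 + D) <= M)%MS -> (2 < \rank M)%N.
Proof.
move=> ne; wlog lt12 : t1 t2 ne / (t1 < t2)%N.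
  move=> hyp; move: (ne); rewrite neq_ltn => /orP[lt|lt]; first exact: hyp.
  by move=> *; apply: (hyp t2 t1); rewrite // eq_sym.
rewrite {ne} -(subnKC (ltnW lt12)) -addnA; set s := (t2 - t1)%N.
have s_gt0 : (0 < s)%N by rewrite subn_gt0.
move=> sub_u sub_us sub_uD sub_usD; rewrite ltnNge; apply/negP => rkM.
have A_unit := ceig_neq0_unitmx eig_neq0.
have pow_relation := rank_le2_pow_relation obs A_unit C_not_eigen s_gt0 rkM sub_u sub_us.
have [a [b relD]] := pow_relation _ sub_uD.
have [c [d relsD]] := pow_relation _ sub_usD.
have b_neq0 : b != 0.
  apply/eqP => b0; suff [/eqP] : (1 : R) = 0 /\ - a = 0 by rewrite oner_eq0.
  apply: (expmx_scalar_indep A_unit C_not_eigen D_gt0).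
  rewrite scale1r raddfN -relD b0 rmorphB rmorphXn /= horner_mx_X horner_mx_scaleXnDC.
  by rewrite scale0r add0r.
have quadE : b *: ('X^s ^+ 2 - ((d - a) / b) *: 'X^s - (c / b)%:P) =
    ('X^(s + D) - (d *: 'X^s + c%:P)) - 'X^s * ('X^D - (b *: 'X^s + a%:P)).
  rewrite !scalerBr !scalerA !mulrA !(mulrC b) -!mulrA divff // !mulr1 -!mul_polyC.
  rewrite -[_ * (c / b)%:P]rmorphM /= [b * _]mulrC divfK // !rmorphB /= exprD; ring.
have : horner_mx A (b *: ('X^s ^+ 2 - ((d - a) / b) *: 'X^s - (c / b)%:P)) = 0.
  by rewrite quadE rmorphB rmorphM /= relsD relD mulr0 subr0.
rewrite horner_mxZ => /eqP; rewrite scaler_eq0 (negbTE b_neq0) /=.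
by apply/negP/quadratic_Xn_annihilator_neq0 => //; apply: nonpathological_pow_inj relD.
Qed.

End Dimension3.

Theorem theorem3 (R : realType) (A : 'M[R]_3) (C : 'rV[R]_3)
  (t1 t2 D : nat) :
  observable A C ->
  (forall l : complex R, ceig A l -> l != 0) ->
  (forall (t : nat) (a : R), (0 < t)%N -> C != a *: (C *m A ^+ t)) ->
  t1 != t2 ->
  (0 < D)%N ->
  ~ pathological A D ->
  \rank (sample_obs_mx A C
           (fun i : 'I_4 => nth 0%N [:: t1; t2; t1 + D; t2 + D]%N i)) = 3%N.
Proof.
move=> obs eig_neq0 C_not_eigen t12 D_gt0 npath.
set M := sample_obs_mx _ _ _; apply/eqP; rewrite eqn_leq rank_leq_col /=.
have row_in (i : 'I_4) : (C *m A ^+ nth 0%N [:: t1; t2; t1 + D; t2 + D]%N i <= M)%MS.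
  by have := row_sub i M; rewrite rowK.
exact: (sample_rows_rank_gt2 obs eig_neq0 C_not_eigen D_gt0 npath t12
          (row_in 0) (row_in 1) (row_in 2) (row_in 3)).
Qed.
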